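(* Let $X$ be a separated metric compact Hausdorff space. A binary continuous submetric $\gamma$ on $X$ is symmetric if and only if $\gamma((x,i),(y,j))=\gamma((x,1-i),(y,1-j))$ for all $x,y\in X$ and $i,j\in\{0,1\}$.
   Context: A metric on a set $X$ is a map $d\colon X\times X\to[0,\infty]$ with $d(x,x)=0$ and $d(x,z)\le d(x,y)+d(y,z)$ (not necessarily symmetric, $\infty$ allowed); separated means $d(x,y)=0=d(y,x)$ implies $x=y$. A separated metric compact Hausdorff space is a compact Hausdorff space with a separated metric continuous $X\times X\to[0,\infty]$ for the upper topology on $[0,\infty]$ (open sets $]u,\infty]$); morphisms are continuous non-expansive maps. $X+X$ is the coproduct with elements $(x,i)$, $i\in\{0,1\}$, coproduct topology and metric $d((x,i),(y,i))=d(x,y)$, $d((x,i),(y,1-i))=\infty$. A binary continuous submetric on $X$ is a (not necessarily separated) metric $\gamma$ on $X+X$, continuous for the upper topology, below the coproduct metric. Its associated corelation is $\binom{q_0}{q_1}\colon X+X\to S:=(X+X)/{\sim_\gamma}$ where $u\sim_\gamma v$ iff $\gamma(u,v)=\gamma(v,u)=0$, $S$ has quotient topology and metric $([u],[v])\mapsto\gamma(u,v)$, $q_i(x)=[(x,i)]$. $\gamma$ is symmetric if there is a continuous non-expansive $s\colon S\to S$ with $s\circ q_0=q_1$ and $s\circ q_1=q_0$. *)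

From HB Require Import structures.
From mathcomp Require Import all_boot all_order all_algebra.
From mathcomp Require Import all_classical all_reals.
From mathcomp Require Import topology.
From mathcomp Require Import quotient_topology sigT_topology.
From mathcomp Require Import generic_quotient.

Set Implicit Arguments.
Unset Strict Implicit.
Unset Printing Implicit Defensive.

Import Order.TTheory GRing.Theory Num.Theory.
Local Open Scope classical_set_scope.
Local Open Scope ring_scope.
Local Open Scope ereal_scope.

(* A (not necessarily symmetric, possibly infinite) metric on T with values
   in [0, +oo] (extended reals). *)
Definition is_metric (R : realType) (T : Type) (d : T -> T -> \bar R) :=
  [/\ forall x y, 0 <= d x y,
      forall x, d x x = 0 &
      forall x y z, d x z <= d x y + d y z].

Definition is_separated (R : realType) (T : Type) (d : T -> T -> \bar R) :=
  forall x y, d x y = 0 -> d y x = 0 -> x = y.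

(* continuity of d : T x T -> [0,+oo] for the upper topology of [0,+oo],
   whose basic open sets are ]u, +oo] *)
Definition upper_continuous (R : realType) (T : topologicalType)
  (d : T -> T -> \bar R) :=
  forall u : \bar R, 0 <= u -> open [set p : T * T | u < d p.1 p.2].

Definition sep_metric_CH (R : realType) (X : topologicalType)
  (d : X -> X -> \bar R) :=
  [/\ compact [set: X], hausdorff_space X,
      is_metric d, is_separated d & upper_continuous d].

(* X + X, with elements (x, i), i in {0,1} represented by bool
   (false = 0, true = 1), with the coproduct (sigma) topology *)
Definition XplusX (X : topologicalType) : topologicalType := {i : bool & X}.

Definition coprod_metric (R : realType) (X : topologicalType)
  (d : X -> X -> \bar R) (u v : XplusX X) : \bar R :=
  if projT1 u == projT1 v then d (projT2 u) (projT2 v) else +oo.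

Record bin_cont_submetric (R : realType) (X : topologicalType)
    (d : X -> X -> \bar R) := BinContSubmetric {
  gam :> XplusX X -> XplusX X -> \bar R;
  gam_metric : is_metric gam;
  gam_cont : upper_continuous gam;
  gam_below : forall u v, gam u v <= coprod_metric d u v
}.

Section Corelation.
Variables (R : realType) (X : topologicalType) (d : X -> X -> \bar R).
Variable g : bin_cont_submetric d.

Definition gam_rel : rel (XplusX X) :=
  fun u v => `[< g u v = 0 /\ g v u = 0 >].

Lemma gam_rel_refl : reflexive gam_rel.
Proof. by move=> u; apply/asboolP; have [_ -> _] := gam_metric g. Qed.

Lemma gam_rel_sym : symmetric gam_rel.
Proof. by move=> u v; apply/asboolP/asboolP => -[]. Qed.

Lemma gam_rel_trans : transitive gam_rel.
Proof.
have [g0 _ gt] := gam_metric g.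
move=> v u w /asboolP[uv vu] /asboolP[vw wv]; apply/asboolP; split.
- by apply/eqP; rewrite eq_le g0 andbT; have := gt u v w; rewrite uv vw adde0.
- by apply/eqP; rewrite eq_le g0 andbT; have := gt w v u; rewrite wv vu adde0.
Qed.

Canonical gam_equiv := EquivRel gam_rel gam_rel_refl gam_rel_sym gam_rel_trans.

Definition corel_space : topologicalType :=
  quotient_topology {eq_quot gam_equiv}%qT.

Definition corel_metric (a b : corel_space) : \bar R := g (repr a) (repr b).

Definition corel_q (i : bool) (x : X) : corel_space :=
  (\pi_(corel_space) (existT (fun _ => X) i x))%qT.

End Corelation.

Arguments corel_metric {R X d} g a b.
Arguments corel_q {R X d} g i x.
Arguments corel_space {R X d} g.

Definition symmetric_submetric (R : realType) (X : topologicalType)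
  (d : X -> X -> \bar R) (g : bin_cont_submetric d) :=
  exists s : corel_space g -> corel_space g,
    [/\ continuous s,
        forall a b, corel_metric g (s a) (s b) <= corel_metric g a b,
        s \o corel_q g false = corel_q g true &
        s \o corel_q g true = corel_q g false].

(* The swap (x, i) |-> (x, 1 - i) of X + X is a continuous involution.  If
   gamma is swap-invariant, the swap preserves ~gamma, hence descends to a
   continuous map s of S = (X + X)/~gamma which preserves the metric of S and
   exchanges q_0 and q_1.  Conversely a symmetry s is determined on the images
   of q_0 and q_1, which cover S, so its non-expansiveness yields
   gamma(swap u, swap v) <= gamma(u, v); applied to swap u, swap v this is an
   equality.  Neither direction uses that (X, d) is a separated metric compact
   Hausdorff space. *)
From HB Require Import structures.
From mathcomp Require Import all_boot all_order all_algebra.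
From mathcomp Require Import all_classical all_reals.
From mathcomp Require Import topology.
From mathcomp Require Import quotient_topology sigT_topology generic_quotient.
Import Order.TTheory GRing.Theory Num.Theory.

Set Implicit Arguments.
Unset Strict Implicit.
Unset Printing Implicit Defensive.

Local Open Scope ereal_scope.

Definition swap_summand (X : Type) : {i : bool & X} -> {i : bool & X} :=
  unstable.sigT_fun (fun i x => existT _ (~~ i) x).

Lemma swap_summandK (X : Type) : involutive (@swap_summand X).
Proof. by case=> i x; rewrite /swap_summand /unstable.sigT_fun /= negbK. Qed.

Lemma swap_summand_continuous (X : topologicalType) :
  continuous (@swap_summand X : XplusX X -> XplusX X).
Proof. by apply: sigT_continuous => i; exact: existT_continuous. Qed.

Section Corelation.
Variables (R : realType) (X : topologicalType) (d : X -> X -> \bar R).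
Variable g : bin_cont_submetric d.

Local Notation pi := (\pi_(corel_space g))%qT.

Lemma gam_rel_eq_l u u' v : gam_rel g u u' -> g u v = g u' v.
Proof.
have [_ _ gtri] := gam_metric g.
move=> /asboolP[uu' u'u]; apply/eqP; rewrite eq_le.
by have := gtri u u' v; have := gtri u' u v; rewrite uu' u'u !add0e => -> ->.
Qed.

Lemma gam_rel_eq_r u v v' : gam_rel g v v' -> g u v = g u v'.
Proof.
have [_ _ gtri] := gam_metric g.
move=> /asboolP[vv' v'v]; apply/eqP; rewrite eq_le.
by have := gtri u v v'; have := gtri u v' v; rewrite vv' v'v !adde0 => -> ->.
Qed.

Lemma corel_eqP u v : pi u = pi v <-> gam_rel g u v.
Proof. exact: (rwP (@eqquotP _ (gam_equiv g) _ u v)). Qed.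

Lemma gam_rel_repr_pi u : gam_rel g (repr (pi u : corel_space g)) u.
Proof. by apply/corel_eqP; rewrite reprK. Qed.

Lemma corel_metric_pi u v : corel_metric g (pi u) (pi v) = g u v.
Proof.
rewrite /corel_metric (gam_rel_eq_l _ (gam_rel_repr_pi u)).
exact: gam_rel_eq_r _ (gam_rel_repr_pi v).
Qed.

Lemma symmetric_swap_le :
  symmetric_submetric g ->
  forall u v, g (swap_summand u) (swap_summand v) <= g u v.
Proof.
move=> [s [_ s_nonexp s_q0 s_q1]] [i x] [j y].
have s_q k z : s (corel_q g k z) = corel_q g (~~ k) z.
  by case: k; [rewrite -s_q1 | rewrite -s_q0].
have := s_nonexp (corel_q g i x) (corel_q g j y).
by rewrite !s_q !corel_metric_pi.
Qed.

Lemma symmetric_swap_invariant :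
  symmetric_submetric g ->
  forall u v, g (swap_summand u) (swap_summand v) = g u v.
Proof.
move=> gsym u v; apply/eqP; rewrite eq_le symmetric_swap_le //=.
have := symmetric_swap_le gsym (swap_summand u) (swap_summand v).
by rewrite !swap_summandK.
Qed.

Lemma swap_invariant_symmetric :
  (forall u v, g (swap_summand u) (swap_summand v) = g u v) ->
  symmetric_submetric g.
Proof.
move=> g_swap.
have swap_rel u v :
    gam_rel g u v -> gam_rel g (swap_summand u) (swap_summand v).
  by move=> /asboolP[uv vu]; apply/asboolP; rewrite !g_swap.
pose s_lift u := pi (swap_summand u).
have s_lift_q i x : s_lift (repr (corel_q g i x)) = corel_q g (~~ i) x.
  exact/corel_eqP/(swap_rel _ (existT _ i x))/gam_rel_repr_pi.
exists (s_lift \o repr); split.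
- apply: repr_comp_continuous.
    move=> u; apply: continuous_comp; first exact: swap_summand_continuous.
    exact: pi_continuous.
  by move=> u v /eqP/corel_eqP/swap_rel/corel_eqP; rewrite /s_lift => ->.
- by move=> a b; rewrite /= corel_metric_pi g_swap.
- by apply: funext => x; rewrite /= s_lift_q.
- by apply: funext => x; rewrite /= s_lift_q.
Qed.

End Corelation.

Theorem lemma5p6 (R : realType) (X : topologicalType) (d : X -> X -> \bar R)
  (hX : sep_metric_CH d) (g : bin_cont_submetric d) :
  symmetric_submetric g <->
  (forall (x y : X) (i j : bool),
     g (existT (fun _ => X) i x) (existT (fun _ => X) j y) =
     g (existT (fun _ => X) (~~ i) x) (existT (fun _ => X) (~~ j) y)).
Proof.
split.
- by move=> /symmetric_swap_invariant g_swap x y i j; rewrite -g_swap.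
- move=> g_swap; apply: swap_invariant_symmetric => -[i x] [j y].
  by rewrite -g_swap.
Qed.
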